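(* Let $p\colon(0,\infty)\to\mathbb{R}$ be smooth with $p'>0$, $A(\rho)=\rho^{-1}\sqrt{p'(\rho)}$, and let $\alpha_0,\alpha_1,\alpha_2,\alpha_3$ be real constants with $\alpha_2\neq0$. Let $G$ be an antiderivative of $\rho\mapsto A(\rho)^2(\rho+\alpha_3)$ on an interval $I\subset(0,\infty)$ not containing $-\alpha_3$. For $(\rho,t)\in I\times\mathbb{R}$ define $$U(\rho,t)=\frac{\alpha_2\rho t+\alpha_1\rho+\alpha_0}{\rho+\alpha_3},$$ $$g(\rho,t)=-\frac{G(\rho)}{\alpha_2}+\frac{\alpha_2^2t^2\rho(\rho+2\alpha_3)+2t\alpha_2\bigl(\alpha_3(\alpha_0+2\alpha_1\rho)+\alpha_1\rho^2\bigr)-(\alpha_0-\alpha_1\alpha_3)^2}{2\alpha_2(\rho+\alpha_3)^2}.$$ Then the surface $$N=\{(t,x,u,\rho)=(t,\,g(\rho,t),\,U(\rho,t),\,\rho):(\rho,t)\in I\times\mathbb{R}\}\subset E$$ is a multivalued solution of the system $\rho_t+(\rho u)_x=0$, $u_t+uu_x+\frac{p'(\rho)}{\rho}\rho_x=0$, i.e. $\omega_1|_N=\omega_2|_N=0$. Equivalently, the density is given implicitly by $x=g(\rho,t)$ and the velocity by $u=\frac{\alpha_2\rho t+\alpha_1\rho+\alpha_0}{\rho+\alpha_3}$.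
   Context: $E$ is the zero-jet space with coordinates $(t,x,u,\rho)$, $\rho>0$, and $\omega_1=\rho\,dt\wedge du+u\,dt\wedge d\rho-dx\wedge d\rho$, $\omega_2=u\,dt\wedge du+\frac{p'(\rho)}{\rho}dt\wedge d\rho-dx\wedge du$. A 2-dimensional submanifold $N\subset E$ is called a multivalued solution of the system if $\omega_1|_N=\omega_2|_N=0$; where $N$ projects diffeomorphically onto the $(t,x)$-plane it is the graph of a classical solution $(u(t,x),\rho(t,x))$. *)

From Stdlib Require Export Reals List.
From Coquelicot Require Export Coquelicot.
Open Scope R_scope.

Definition d1 (f : R -> R -> R) (r s : R) : R := Derive (fun r' => f r' s) r.
Definition d2 (f : R -> R -> R) (r s : R) : R := Derive (fun s' => f r s') s.

(* Coefficient of dr/\ds in the pullback of da/\db, where a b are the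
   coordinate functions composed with the parametrization. *)
Definition wedge_pb (a b : R -> R -> R) (r s : R) : R :=
  d1 a r s * d2 b r s - d2 a r s * d1 b r s.

(* Pullback (coefficient of dr/\ds) of
   omega_1 = rho dt/\du + u dt/\drho - dx/\drho  along
   (r,s) |-> (t,x,u,rho) = (T r s, X r s, U r s, Rh r s). *)
Definition omega1_pb (T X U Rh : R -> R -> R) (r s : R) : R :=
  Rh r s * wedge_pb T U r s + U r s * wedge_pb T Rh r s - wedge_pb X Rh r s.

(* Pullback of omega_2 = u dt/\du + p'(rho)/rho dt/\drho - dx/\du ,
   dp being p'. *)
Definition omega2_pb (dp : R -> R) (T X U Rh : R -> R -> R) (r s : R) : R :=
  U r s * wedge_pb T U r s + dp (Rh r s) / Rh r s * wedge_pb T Rh r s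
  - wedge_pb X U r s.

(* A parametrized surface Phi = (T,X,U,Rh) : D -> E (D subset of R^2) whose
   image N is a 2-dimensional (embedded, via injectivity + immersion)
   submanifold of E = {rho > 0} on which omega_1 and omega_2 restrict to 0. *)
Definition multivalued_solution (dp : R -> R) (D : R -> R -> Prop)
  (T X U Rh : R -> R -> R) : Prop :=
  (forall r s, D r s -> 0 < Rh r s) /\
  (forall r s, D r s ->
     forall f, (f = T \/ f = X \/ f = U \/ f = Rh) ->
       ex_derive (fun r' => f r' s) r /\ ex_derive (fun s' => f r s') s) /\
  (forall r s r' s', D r s -> D r' s' ->
     T r s = T r' s' -> X r s = X r' s' -> U r s = U r' s' -> Rh r s = Rh r' s' ->
     r = r' /\ s = s') /\
  (forall r s, D r s ->
     exists a b, In a (T :: X :: U :: Rh :: nil) /\ In b (T :: X :: U :: Rh :: nil)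
       /\ wedge_pb a b r s <> 0) /\
  (forall r s, D r s -> omega1_pb T X U Rh r s = 0) /\
  (forall r s, D r s -> omega2_pb dp T X U Rh r s = 0).

Definition Afun (p : R -> R) (r : R) : R := sqrt (Derive p r) / r.

Definition Ufun (a0 a1 a2 a3 : R) (r t : R) : R :=
  (a2 * r * t + a1 * r + a0) / (r + a3).

Definition gfun (G : R -> R) (a0 a1 a2 a3 : R) (r t : R) : R :=
  - G r / a2
  + (a2 ^ 2 * t ^ 2 * r * (r + 2 * a3)
     + 2 * t * a2 * (a3 * (a0 + 2 * a1 * r) + a1 * r ^ 2)
     - (a0 - a1 * a3) ^ 2)
    / (2 * a2 * (r + a3) ^ 2).

From Stdlib Require Import Lra Field.

(* The surface N is a graph over the parameter plane (rho,t): it is the image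
   of (r,s) |-> (t,x,u,rho) = (s, X r s, U r s, r).  For such "graph surfaces"
   the pullbacks of omega_1 and omega_2 reduce to two first-order identities
   between the partial derivatives of X and U:
     omega_1|_N = 0  <=>  X_s = U + r U_r,
     omega_2|_N = 0  <=>  X_s U_r - X_r U_s = U U_r + p'(r)/r,
   while injectivity and immersivity of the parametrization are automatic
   (the t- and rho-coordinates already recover the parameters). *)

Definition t_coord (r s : R) : R := s.
Definition rho_coord (r s : R) : R := r.

(* The derivative of the identity, in the lambda form produced by [d1]/[d2]. *)
Lemma Derive_ident (x : R) : Derive (fun y : R => y) x = 1.
Proof. exact (Derive_id x). Qed.

Lemma wedge_t_rho (r s : R) : wedge_pb t_coord rho_coord r s = -1.
Proof.
  unfold wedge_pb, d1, d2, t_coord, rho_coord.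
  rewrite !Derive_const, !Derive_ident; ring.
Qed.

Lemma wedge_t_f (f : R -> R -> R) (r s : R) :
  wedge_pb t_coord f r s = - d1 f r s.
Proof.
  unfold wedge_pb, d1, d2, t_coord.
  rewrite Derive_const, Derive_ident; ring.
Qed.

Lemma wedge_f_rho (f : R -> R -> R) (r s : R) :
  wedge_pb f rho_coord r s = - d2 f r s.
Proof.
  unfold wedge_pb, d1, d2, rho_coord.
  rewrite Derive_const, Derive_ident; ring.
Qed.

Lemma omega1_graph (X U : R -> R -> R) (r s : R) :
  omega1_pb t_coord X U rho_coord r s = d2 X r s - U r s - r * d1 U r s.
Proof.
  unfold omega1_pb; rewrite wedge_t_f, wedge_t_rho, wedge_f_rho.
  unfold rho_coord; ring.
Qed.

Lemma omega2_graph (dp : R -> R) (X U : R -> R -> R) (r s : R) :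
  omega2_pb dp t_coord X U rho_coord r s
  = d2 X r s * d1 U r s - d1 X r s * d2 U r s - U r s * d1 U r s - dp r / r.
Proof.
  unfold omega2_pb; rewrite wedge_t_f, wedge_t_rho.
  unfold wedge_pb, rho_coord, Rdiv; ring.
Qed.

Lemma graph_multivalued_solution (dp : R -> R) (D : R -> R -> Prop)
  (X U : R -> R -> R) :
  (forall r s, D r s -> 0 < r) ->
  (forall r s, D r s -> forall f, (f = X \/ f = U) ->
     ex_derive (fun r' => f r' s) r /\ ex_derive (fun s' => f r s') s) ->
  (forall r s, D r s -> d2 X r s = U r s + r * d1 U r s) ->
  (forall r s, D r s ->
     d2 X r s * d1 U r s - d1 X r s * d2 U r s = U r s * d1 U r s + dp r / r) ->
  multivalued_solution dp D t_coord X U rho_coord.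
Proof.
  intros Hpos Hdiff Hom1 Hom2.
  split; [|split; [|split; [|split; [|split]]]].
  - exact Hpos.
  - intros r s Hrs f Hf.
    destruct Hf as [-> | [-> | [-> | ->]]].
    + unfold t_coord; split; auto_derive; exact I.
    + apply Hdiff; auto.
    + apply Hdiff; auto.
    + unfold rho_coord; split; auto_derive; exact I.
  - unfold t_coord, rho_coord; intros r s r' s' _ _ Es _ _ Er; auto.
  - intros r s _; exists t_coord, rho_coord; simpl.
    repeat split; [tauto | tauto |].
    rewrite wedge_t_rho; lra.
  - intros r s Hrs; rewrite omega1_graph, (Hom1 r s Hrs); ring.
  - intros r s Hrs; rewrite omega2_graph, (Hom2 r s Hrs); ring.
Qed.

Lemma d1_is_derive (f : R -> R -> R) (r s l : R) :
  is_derive (fun r' => f r' s) r l -> d1 f r s = l.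
Proof. exact (is_derive_unique _ _ _). Qed.

Lemma d2_is_derive (f : R -> R -> R) (r s l : R) :
  is_derive (fun s' => f r s') s l -> d2 f r s = l.
Proof. exact (is_derive_unique _ _ _). Qed.

Lemma Afun_sq (p : R -> R) (r : R) :
  0 <= Derive p r -> r <> 0 -> Afun p r ^ 2 = Derive p r / r ^ 2.
Proof.
  intros Hp Hr; unfold Afun, Rdiv.
  rewrite Rpow_mult_distr, pow2_sqrt, pow_inv by exact Hp; reflexivity.
Qed.

Section ExplicitSolution.
Variables (a0 a1 a2 a3 : R) (G : R -> R).
Hypothesis Ha2 : a2 <> 0.

Lemma is_derive_Ufun_r (r s : R) : r + a3 <> 0 ->
  is_derive (fun r' => Ufun a0 a1 a2 a3 r' s) r
    ((a2 * s * a3 + a1 * a3 - a0) / (r + a3) ^ 2).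
Proof. intro Hr; unfold Ufun; auto_derive; [auto | field; exact Hr]. Qed.

Lemma is_derive_Ufun_s (r s : R) : r + a3 <> 0 ->
  is_derive (fun s' => Ufun a0 a1 a2 a3 r s') s (a2 * r / (r + a3)).
Proof. intro Hr; unfold Ufun; auto_derive; [auto | field; exact Hr]. Qed.

Lemma is_derive_gfun_r (r s g' : R) : r + a3 <> 0 -> is_derive G r g' ->
  is_derive (fun r' => gfun G a0 a1 a2 a3 r' s) r
    (- g' / a2 + (a2 * s ^ 2 + 2 * a1 * s) / (r + a3)
     - (a2 ^ 2 * s ^ 2 * r * (r + 2 * a3)
        + 2 * s * a2 * (a3 * (a0 + 2 * a1 * r) + a1 * r ^ 2)
        - (a0 - a1 * a3) ^ 2) / (a2 * (r + a3) ^ 3)).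
Proof.
  intros Hr HG; unfold gfun; auto_derive.
  - split; [exists g'; exact HG |].
    repeat split; rewrite ?Rmult_1_r;
      repeat apply Rmult_integral_contrapositive_currified; auto; lra.
  - replace (Derive (fun x => G x) r) with g' by (symmetry; exact (is_derive_unique _ _ _ HG)).
    field; auto.
Qed.

Lemma is_derive_gfun_s (r s : R) : r + a3 <> 0 ->
  is_derive (fun s' => gfun G a0 a1 a2 a3 r s') s
    ((a2 * s * r * (r + 2 * a3) + a3 * (a0 + 2 * a1 * r) + a1 * r ^ 2)
     / (r + a3) ^ 2).
Proof. intro Hr; unfold gfun; auto_derive; [exact I | field; auto]. Qed.

Lemma explicit_omega1 (r s : R) : r + a3 <> 0 ->
  d2 (gfun G a0 a1 a2 a3) r s
  = Ufun a0 a1 a2 a3 r s + r * d1 (Ufun a0 a1 a2 a3) r s.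
Proof.
  intro Hr.
  rewrite (d2_is_derive _ _ _ _ (is_derive_gfun_s r s Hr)),
          (d1_is_derive _ _ _ _ (is_derive_Ufun_r r s Hr)).
  unfold Ufun; field; exact Hr.
Qed.

(* The omega_2 identity, for G' = (c / r^2) (r + a3), i.e. c = p'(r). *)
Lemma explicit_omega2 (r s c : R) : r + a3 <> 0 -> r <> 0 ->
  is_derive G r (c / r ^ 2 * (r + a3)) ->
  d2 (gfun G a0 a1 a2 a3) r s * d1 (Ufun a0 a1 a2 a3) r s
  - d1 (gfun G a0 a1 a2 a3) r s * d2 (Ufun a0 a1 a2 a3) r s
  = Ufun a0 a1 a2 a3 r s * d1 (Ufun a0 a1 a2 a3) r s + c / r.
Proof.
  intros Hr Hr0 HG.
  rewrite (d2_is_derive _ _ _ _ (is_derive_gfun_s r s Hr)),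
          (d1_is_derive _ _ _ _ (is_derive_gfun_r r s _ Hr HG)),
          (d1_is_derive _ _ _ _ (is_derive_Ufun_r r s Hr)),
          (d2_is_derive _ _ _ _ (is_derive_Ufun_s r s Hr)).
  unfold Ufun; field; auto.
Qed.

End ExplicitSolution.

Lemma interval_admissible (lo hi : Rbar) (a3 r : R) :
  Rbar_le (Finite 0) lo ->
  ~ (Rbar_lt lo (Finite (- a3)) /\ Rbar_lt (Finite (- a3)) hi) ->
  Rbar_lt lo (Finite r) -> Rbar_lt (Finite r) hi ->
  0 < r /\ r + a3 <> 0.
Proof.
  intros Hlo Hnot Hr_lo Hr_hi; split.
  - destruct lo; simpl in *; lra.
  - intro E; apply Hnot; replace (- a3) with r by lra; auto.
Qed.

Theorem mainTheorem3
  (p : R -> R)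
  (Hsmooth : forall (n : nat) (x : R), 0 < x -> ex_derive_n p n x)
  (Hpos : forall x : R, 0 < x -> 0 < Derive p x)
  (a0 a1 a2 a3 : R) (Ha2 : a2 <> 0)
  (lo hi : Rbar)
  (Hlo : Rbar_le (Finite 0) lo) (Hlohi : Rbar_lt lo hi)
  (Hnot : ~ (Rbar_lt lo (Finite (- a3)) /\ Rbar_lt (Finite (- a3)) hi))
  (G : R -> R)
  (HG : forall r : R, Rbar_lt lo (Finite r) -> Rbar_lt (Finite r) hi ->
        is_derive G r (Afun p r ^ 2 * (r + a3))) :
  multivalued_solution (Derive p)
    (fun r t => Rbar_lt lo (Finite r) /\ Rbar_lt (Finite r) hi)
    (fun r t => t) (gfun G a0 a1 a2 a3) (Ufun a0 a1 a2 a3) (fun r t => r).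
Proof.
  apply graph_multivalued_solution;
    intros r s [Hr_lo Hr_hi];
    destruct (interval_admissible lo hi a3 r Hlo Hnot Hr_lo Hr_hi) as [Hr0 Hr].
  - exact Hr0.
  - intros f [-> | ->]; split; eexists.
    + exact (is_derive_gfun_r _ _ _ _ _ Ha2 r s _ Hr (HG r Hr_lo Hr_hi)).
    + exact (is_derive_gfun_s _ _ _ _ _ Ha2 r s Hr).
    + exact (is_derive_Ufun_r _ _ _ _ r s Hr).
    + exact (is_derive_Ufun_s _ _ _ _ r s Hr).
  - exact (explicit_omega1 _ _ _ _ _ Ha2 r s Hr).
  - apply explicit_omega2; [exact Ha2 | exact Hr | lra |].
    rewrite <- Afun_sq; [exact (HG r Hr_lo Hr_hi) | | lra].
    apply Rlt_le, Hpos, Hr0.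
Qed.
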